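(* For all $m,n\in\mathbb{N}$ with $m\le n$, the minimization problem defining $d_{m,n}$ admits an optimal transport plan $z\in\mathcal{F}_{m,n}$ that is simple, i.e. satisfies $z_{i,i}=\min\{\pi^m_i,\pi^n_i\}$ for all $i=0,\dots,m$.
   Context: Let $\mathbb{N}=\{0,1,2,\dots\}$. Fix a sequence $(\pi^n)_{n\in\mathbb{N}}$ where each $\pi^n=(\pi^n_i)_{i\in\mathbb{N}}$ is a probability distribution on $\mathbb{N}$ with support contained in $\{0,\dots,n\}$, and $\pi^n\ne\pi^m$ for $m\ne n$. Define reals $d_{m,n}$ for $m,n\in\mathbb{N}\cup\{-1\}$ recursively as follows: $d_{-1,-1}=0$, $d_{-1,j}=d_{j,-1}=1$ for $j\in\mathbb{N}$, and for $m,n\in\mathbb{N}$, $$d_{m,n}=\min_{z\in\mathcal{F}_{m,n}}\sum_{i=0}^m\sum_{j=0}^n z_{i,j}\,d_{i-1,j-1},$$ where $\mathcal{F}_{m,n}$ is the set of transport plans from $\pi^m$ to $\pi^n$, i.e. arrays $z=(z_{i,j})_{0\le i\le m,\,0\le j\le n}$ with $z_{i,j}\ge0$, $\sum_{j=0}^n z_{i,j}=\pi^m_i$ for all $i\le m$, and $\sum_{i=0}^m z_{i,j}=\pi^n_j$ for all $j\le n$. An optimal transport for $d_{m,n}$ is a minimizer of this problem. *)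

From HB Require Import structures.
From mathcomp Require Import all_boot all_order all_algebra.
From mathcomp Require Import reals.
Set Implicit Arguments. Unset Strict Implicit. Unset Printing Implicit Defensive.
Import Order.TTheory GRing.Theory Num.Theory.
Local Open Scope ring_scope.

Definition is_distr_seq (R : realType) (pi : nat -> nat -> R) : Prop :=
  forall n : nat,
    (forall i, 0 <= pi n i) /\
    (forall i, (n < i)%N -> pi n i = 0) /\
    \sum_(i < n.+1) pi n i = 1.

Definition is_plan (R : realType) (pi : nat -> nat -> R) (m n : nat)
    (z : 'M[R]_(m.+1, n.+1)) : Prop :=
  (forall i j, 0 <= z i j) /\
  (forall i : 'I_m.+1, \sum_(j < n.+1) z i j = pi m i) /\
  (forall j : 'I_n.+1, \sum_(i < m.+1) z i j = pi n j).

(* d_ext d i j = d_{i-1,j-1}, where d : nat -> nat -> R stores d_{m,n}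
   for m,n in N and the boundary values d_{-1,-1}=0, d_{-1,j}=d_{j,-1}=1. *)
Definition d_ext (R : realType) (d : nat -> nat -> R) (i j : nat) : R :=
  if (i == 0%N) && (j == 0%N) then 0
  else if (i == 0%N) || (j == 0%N) then 1
  else d i.-1 j.-1.

Definition cost (R : realType) (d : nat -> nat -> R) (m n : nat)
    (z : 'M[R]_(m.+1, n.+1)) : R :=
  \sum_(i < m.+1) \sum_(j < n.+1) z i j * d_ext d i j.

Definition is_optimal (R : realType) (pi : nat -> nat -> R)
    (d : nat -> nat -> R) (m n : nat) (z : 'M[R]_(m.+1, n.+1)) : Prop :=
  is_plan pi z /\ forall z' : 'M[R]_(m.+1, n.+1), is_plan pi z' -> cost d z <= cost d z'.

Definition is_d (R : realType) (pi : nat -> nat -> R) (d : nat -> nat -> R)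
    : Prop :=
  forall m n : nat,
    (exists z : 'M[R]_(m.+1, n.+1), is_plan pi z /\ cost d z = d m n) /\
    (forall z : 'M[R]_(m.+1, n.+1), is_plan pi z -> d m n <= cost d z).

From HB Require Import structures.
From mathcomp Require Import all_boot all_order all_algebra.
From mathcomp Require Import reals.
From mathcomp Require Import ring lra zify.
Import Order.TTheory GRing.Theory Num.Theory.
Local Open Scope ring_scope.
Set Implicit Arguments. Unset Strict Implicit.

(* The costs [d_ext d i j] behave like a pseudometric on nat: they lie in
   [0, 1], vanish on the diagonal, and gluing an optimal plan from pi^a to
   pi^b with one from pi^b to pi^c yields the triangle inequality, by
   induction on a + b + c.
   Given an optimal plan z and i <= m, pair the mass of row i lying off
   column i with the mass of column i lying off row i: routing it directly
   from k to l instead of through i, with as much mass as nonnegativity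
   allows, raises z(i,i) to min(pi^m_i, pi^n_i), lowers no cell outside
   row i and column i, and by the triangle inequality through i does not
   increase the cost.  Doing this for i = 0, ..., m gives a simple optimal
   plan. *)

Lemma sum_mulrb_eq (V : nmodType) N (F : 'I_N -> V) (i : 'I_N) :
  \sum_k F k *+ (k == i) = F i.
Proof. by under eq_bigr do rewrite mulrb; rewrite -big_mkcond big_pred1_eq. Qed.

Lemma sum_centered (R : pzRingType) N (F w : 'I_N -> R) (i : 'I_N) :
  \sum_k (F k - (\sum_l F l) *+ (k == i)) * w k = \sum_k F k * (w k - w i).
Proof.
under eq_bigr do rewrite mulrBl mulrnAl.
under [RHS]eq_bigr do rewrite mulrBr.
by rewrite !big_split /= !sumrN sum_mulrb_eq mulr_suml.
Qed.

Lemma mulfK_le (R : numFieldType) (u v : R) : 0 <= u -> u <= v -> u * v / v = u.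
Proof.
move=> u_ge0 u_le_v; have [v0|v_neq0] := eqVneq v 0; last by rewrite mulfK.
have u0 : u = 0 by apply/le_anti; rewrite u_ge0 andbT -v0.
by rewrite u0 !mul0r.
Qed.

Section Plans.
Variables (R : realType) (pi : nat -> nat -> R) (m n : nat).
Variable z : 'M[R]_(m.+1, n.+1).
Hypothesis z_plan : is_plan pi z.

Lemma plan_le_row i j : z i j <= pi m i.
Proof.
have [z_ge0 [<- _]] := z_plan.
by rewrite (bigD1 j) //= lerDl sumr_ge0.
Qed.

Lemma plan_le_col i j : z i j <= pi n j.
Proof.
have [z_ge0 [_ <-]] := z_plan.
by rewrite (bigD1 i) //= lerDl sumr_ge0.
Qed.

Lemma plan_mass : is_distr_seq pi -> \sum_i \sum_j z i j = 1.
Proof.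
move=> pi_distr; have [_ [_ <-]] := pi_distr m.
by apply: eq_bigr => i _; rewrite (proj1 (proj2 z_plan)).
Qed.

Lemma cost_bounds (d : nat -> nat -> R) : is_distr_seq pi ->
  (forall (i : 'I_m.+1) (j : 'I_n.+1), 0 <= d_ext d i j <= 1) ->
  0 <= cost d z <= 1.
Proof.
move=> pi_distr d_bounds; have z_ge0 := proj1 z_plan.
rewrite /cost -(plan_mass pi_distr); apply/andP; split.
  apply: sumr_ge0 => i _; apply: sumr_ge0 => j _.
  by have /andP[? _] := d_bounds i j; rewrite mulr_ge0.
apply: ler_sum => i _; apply: ler_sum => j _.
by have /andP[_ ?] := d_bounds i j; rewrite ler_piMr.
Qed.

End Plans.

Section Gluing.
Variables (R : realType) (pi d : nat -> nat -> R) (a b c : nat).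
Variables (x : 'M[R]_(a.+1, b.+1)) (y : 'M[R]_(b.+1, c.+1)).
Hypotheses (x_plan : is_plan pi x) (y_plan : is_plan pi y).

Lemma glue_weight_ge0 i j k : 0 <= x i j * y j k / pi b j.
Proof.
have [x_ge0 _] := x_plan; have [y_ge0 _] := y_plan.
rewrite divr_ge0 ?mulr_ge0 //.
exact: le_trans (x_ge0 ord0 j) (plan_le_col x_plan ord0 j).
Qed.

Definition glue : 'M[R]_(a.+1, c.+1) :=
  \matrix_(i, k) \sum_j x i j * y j k / pi b j.

Lemma sum_glue_r i j : \sum_k x i j * y j k / pi b j = x i j.
Proof.
rewrite -mulr_suml -mulr_sumr (proj1 (proj2 y_plan)).
by rewrite mulfK_le ?(proj1 x_plan) ?(plan_le_col x_plan).
Qed.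

Lemma sum_glue_l j k : \sum_i x i j * y j k / pi b j = y j k.
Proof.
rewrite -mulr_suml -mulr_suml (proj2 (proj2 x_plan)) [_ * y j k]mulrC.
by rewrite mulfK_le ?(proj1 y_plan) ?(plan_le_row y_plan).
Qed.

Lemma glue_plan : is_plan pi glue.
Proof.
have [x_ge0 [x_row _]] := x_plan; have [y_ge0 [_ y_col]] := y_plan.
split; [|split] => [i k | i | k]; rewrite ?mxE.
- by apply: sumr_ge0 => j _; apply: glue_weight_ge0.
- under eq_bigr do rewrite mxE; rewrite exchange_big /=.
  by under eq_bigr do rewrite sum_glue_r.
- under eq_bigr do rewrite mxE; rewrite exchange_big /=.
  by under eq_bigr do rewrite sum_glue_l.
Qed.

Lemma cost_glue_le :
  (forall (i : 'I_a.+1) (j : 'I_b.+1) (k : 'I_c.+1),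
     d_ext d i k <= d_ext d i j + d_ext d j k) ->
  cost d glue <= cost d x + cost d y.
Proof.
move=> triangle; pose t i j k := x i j * y j k / pi b j.
have -> : cost d x + cost d y =
    \sum_i \sum_k \sum_j (t i j k * d_ext d i j + t i j k * d_ext d j k).
  under [RHS]eq_bigr do under eq_bigr do rewrite big_split /=.
  under [RHS]eq_bigr do rewrite big_split /=.
  rewrite big_split /=; congr (_ + _).
    apply: eq_bigr => i _; rewrite exchange_big /=; apply: eq_bigr => j _.
    by rewrite -mulr_suml sum_glue_r.
  rewrite exchange_big /=; under [RHS]eq_bigr do rewrite exchange_big /=.
  rewrite exchange_big /=; apply: eq_bigr => j _; apply: eq_bigr => k _.
  by rewrite -mulr_suml sum_glue_l.
rewrite ler_sum // => i _; rewrite ler_sum // => k _.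
rewrite mxE mulr_suml ler_sum // => j _.
by rewrite -mulrDr ler_wpM2l ?glue_weight_ge0.
Qed.

End Gluing.

Lemma invr_max_mul_le1 (R : realFieldType) (x y : R) :
  0 <= x -> 0 <= y -> (Num.max x y)^-1 * x <= 1.
Proof.
move=> x_ge0 y_ge0; have [->|x_neq0] := eqVneq x 0; first by rewrite mulr0 ler01.
have max_gt0 : 0 < Num.max x y by rewrite lt_max lt_def x_neq0 x_ge0.
by rewrite mulrC ler_pdivrMr // mul1r le_max lexx.
Qed.

Lemma invr_max_mul (R : realFieldType) (x y : R) :
  0 <= x -> 0 <= y -> (Num.max x y)^-1 * (x * y) = Num.min x y.
Proof.
wlog xy : x y / x <= y.
  move=> hwlog x_ge0 y_ge0; case/orP: (le_total x y) => [xy|yx]; first exact: hwlog.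
  by rewrite maxC minC [x * y]mulrC; apply: hwlog.
by move=> x_ge0 y_ge0; rewrite (max_r xy) (min_l xy) mulrC mulfK_le.
Qed.

Section Rerouting.
Variables (R : realType) (pi d : nat -> nat -> R) (m n : nat).
Variables (z : 'M[R]_(m.+1, n.+1)) (i : 'I_m.+1) (j : 'I_n.+1).
Hypothesis z_plan : is_plan pi z.

Let col_off k := z k j *+ (k != i).
Let row_off l := z i l *+ (l != j).
Let col_mass := \sum_k col_off k.
Let row_mass := \sum_l row_off l.
Let u k := col_off k - col_mass *+ (k == i).
Let v l := row_off l - row_mass *+ (l == j).
Let s := (Num.max row_mass col_mass)^-1.

(* For all [k != i] and [l != j], moves [s * z k j * z i l] from the cells
   [(k, j)] and [(i, l)] to [(k, l)] and [(i, j)]. *)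
Definition reroute : 'M[R]_(m.+1, n.+1) :=
  \matrix_(k, l) (z k l + s * (u k * v l)).

Let col_off_ge0 k : 0 <= col_off k.
Proof. by rewrite mulrn_wge0 ?(proj1 z_plan). Qed.

Let row_off_ge0 l : 0 <= row_off l.
Proof. by rewrite mulrn_wge0 ?(proj1 z_plan). Qed.

Let s_ge0 : 0 <= s.
Proof. by rewrite invr_ge0 le_max sumr_ge0. Qed.

Let row_split : pi m i = z i j + row_mass.
Proof.
rewrite -(proj1 (proj2 z_plan)) (bigD1 j) //=; congr (_ + _).
by rewrite big_mkcond; apply: eq_bigr => l _; rewrite /row_off mulrb.
Qed.

Let col_split : pi n j = z i j + col_mass.
Proof.
rewrite -(proj2 (proj2 z_plan)) (bigD1 i) //=; congr (_ + _).
by rewrite big_mkcond; apply: eq_bigr => k _; rewrite /col_off mulrb.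
Qed.

Lemma reroute_plan : is_plan pi reroute.
Proof.
have [z_ge0 [z_row z_col]] := z_plan.
split; [|split] => [k l | k | l]; rewrite ?mxE.
- have s_row : s * row_mass <= 1 by rewrite invr_max_mul_le1 ?sumr_ge0.
  have s_col : s * col_mass <= 1 by rewrite /s maxC invr_max_mul_le1 ?sumr_ge0.
  have := z_ge0 k l; have := z_ge0 k j; have := z_ge0 i l.
  rewrite /u /v /col_off /row_off.
  have [->|ki] := eqVneq k i; have [->|lj] := eqVneq l j;
    rewrite ?eqxx ?(negPf ki) ?(negPf lj) ?mulr0n ?mulr1n ?subr0 ?sub0r ?mulrNN.
  + by move=> *; rewrite addr_ge0 ?mulr_ge0 ?sumr_ge0.
  + nra.
  + nra.
  + by move=> *; rewrite addr_ge0 ?mulr_ge0.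
- under eq_bigr do rewrite mxE.
  by rewrite big_split /= -mulr_sumr -mulr_sumr /v big_split /= sumrN
    sum_mulrb_eq subrr !mulr0 addr0.
- under eq_bigr do rewrite mxE.
  by rewrite big_split /= -mulr_sumr -mulr_suml /u big_split /= sumrN
    sum_mulrb_eq subrr mul0r mulr0 addr0.
Qed.

Lemma reroute_pivot : reroute i j = Num.min (pi m i) (pi n j).
Proof.
rewrite mxE /u /v /col_off /row_off !eqxx /= !mulr0n !mulr1n !add0r mulrNN.
rewrite row_split col_split -real_addr_minr ?num_real //; congr (_ + _).
by rewrite [col_mass * _]mulrC invr_max_mul ?sumr_ge0.
Qed.

Lemma reroute_ge k l : k != i -> l != j -> z k l <= reroute k l.
Proof.
move=> ki lj; rewrite mxE /u /v (negPf ki) (negPf lj) !subr0 lerDl.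
by rewrite mulr_ge0 ?mulr_ge0.
Qed.

Lemma cost_reroute_le :
  (forall (k : 'I_m.+1) (l : 'I_n.+1),
     d_ext d k l + d_ext d i j <= d_ext d k j + d_ext d i l) ->
  cost d reroute <= cost d z.
Proof.
move=> swap; pose c (k : 'I_m.+1) (l : 'I_n.+1) := d_ext d k l.
have -> : cost d reroute = cost d z + s * \sum_k u k * \sum_l v l * c k l.
  rewrite /cost mulr_sumr -big_split /=; apply: eq_bigr => k _.
  rewrite mulr_sumr mulr_sumr -big_split /=; apply: eq_bigr => l _.
  by rewrite /reroute mxE /c; ring.
rewrite gerDl mulr_ge0_le0 //.
under eq_bigr do rewrite sum_centered.
rewrite sum_centered sumr_le0 // => k _; rewrite mulr_ge0_le0 //.
rewrite -sumrB sumr_le0 // => l _; rewrite -mulrBr mulr_ge0_le0 //.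
by rewrite /c; have := swap k l; lra.
Qed.

End Rerouting.

Section Distance.
Variables (R : realType) (pi d : nat -> nat -> R).
Hypotheses (pi_distr : is_distr_seq pi) (d_def : is_d pi d).

Lemma d_ext_bounds a b : 0 <= d_ext d a b <= 1.
Proof.
move: {2}(a + b)%N (leqnn (a + b)) => N.
elim: N a b => [|N IH] [|a] [|b] //= ab_le; rewrite /d_ext /= ?lexx ?ler01 //.
have [[z [z_plan <-]] _] := d_def a b.
apply: (cost_bounds z_plan) => // i j; apply: IH.
by have := ltn_ord i; have := ltn_ord j; lia.
Qed.

Lemma d_ext_diag k : d_ext d k k = 0.
Proof.
elim/ltn_ind: k => -[//|k] IH.
have [_ d_min] := d_def k k.
pose z : 'M[R]_(k.+1, k.+1) := \matrix_(i, j) (pi k i *+ (i == j)).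
have z_plan : is_plan pi z.
  split; [|split] => [i j | i | j]; rewrite ?mxE.
  - by rewrite mulrn_wge0 ?(proj1 (pi_distr k)).
  - by under eq_bigr do rewrite mxE eq_sym; rewrite sum_mulrb_eq.
  - by under eq_bigr do rewrite mxE; rewrite sum_mulrb_eq.
apply/le_anti/andP; split; last by case/andP: (d_ext_bounds k.+1 k.+1).
apply: le_trans (d_min z z_plan) _.
rewrite /cost big1 // => i _; rewrite big1 // => j _; rewrite mxE.
by have [<-|_] := eqVneq i j; rewrite ?IH ?mulr0 ?mul0r.
Qed.

Lemma d_ext_triangle a b c : d_ext d a c <= d_ext d a b + d_ext d b c.
Proof.
move: {2}(a + b + c)%N (leqnn (a + b + c)) => N.
elim: N a b c => [|N IH] a b c abc_le.
  have [-> -> ->] : [/\ a = 0, b = 0 & c = 0]%N by split; lia.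
  by rewrite /d_ext /= addr0.
move: (d_ext_bounds a b) (d_ext_bounds b c) (d_ext_bounds a c).
case: a b c abc_le => [|a] [|b] [|c] abc_le; rewrite /d_ext /=;
  try by move=> /andP[? ?] /andP[? ?] /andP[? ?]; lra.
move=> _ _ _.
have [[x [x_plan <-]] _] := d_def a b; have [[y [y_plan <-]] _] := d_def b c.
have [_ d_min] := d_def a c.
apply: le_trans (d_min _ (glue_plan x_plan y_plan)) (cost_glue_le x_plan y_plan _).
move=> i j k; apply: IH.
by have := ltn_ord i; have := ltn_ord j; have := ltn_ord k; lia.
Qed.

End Distance.

Section SimpleOptimalPlan.
Variables (R : realType) (pi d : nat -> nat -> R).
Hypotheses (pi_distr : is_distr_seq pi) (d_def : is_d pi d).
Variables (m n : nat) (mn : (m <= n)%N).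

Let inordE (i : 'I_m.+1) : (inord i : 'I_n.+1) = i :> nat.
Proof. by rewrite inordK // ltnS (leq_trans _ mn) // -ltnS. Qed.

Lemma optimal_simple_prefix t : (t <= m.+1)%N ->
  exists z : 'M[R]_(m.+1, n.+1), is_optimal pi d z /\
    forall i : 'I_m.+1, (i < t)%N -> z i (inord i) = Num.min (pi m i) (pi n i).
Proof.
elim: t => [_|t IH t_lt].
  have [[z [z_plan z_cost]] d_min] := d_def m n.
  by exists z; split=> [|[]//]; split=> // w /d_min; rewrite z_cost.
have [z [[z_plan z_opt] z_simple]] := IH (ltnW t_lt).
pose t' : 'I_m.+1 := Ordinal t_lt.
have z'_plan := reroute_plan t' (inord t') z_plan.
exists (reroute z t' (inord t')); split.
  split=> // w /z_opt; apply: le_trans; apply: (cost_reroute_le z_plan) => k l.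
  by rewrite inordE (d_ext_diag pi_distr d_def) addr0 (d_ext_triangle pi_distr d_def).
move=> i; rewrite ltnS leq_eqVlt => /orP[/eqP i_t | i_lt].
  have -> : i = t' by apply: val_inj.
  by rewrite (reroute_pivot _ _ z_plan) inordE.
apply/le_anti; rewrite le_min plan_le_row //=.
have := plan_le_col z'_plan i (inord i); rewrite inordE => -> /=.
have i_neq_t : i != t' by rewrite -(inj_eq val_inj) /= neq_ltn i_lt.
have inord_neq : (inord i : 'I_n.+1) != inord t'.
  by rewrite -(inj_eq val_inj) /= (inordE i) (inordE t').
by rewrite -(z_simple i i_lt) (reroute_ge z_plan).
Qed.

End SimpleOptimalPlan.

Unset Implicit Arguments.

Theorem proposition1 (R : realType) (pi : nat -> nat -> R)
  (d : nat -> nat -> R) :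
  is_distr_seq pi ->
  (forall m n : nat, m <> n -> pi m <> pi n) ->
  is_d pi d ->
  forall m n : nat, (m <= n)%N ->
    exists z : 'M[R]_(m.+1, n.+1),
      is_optimal pi d z /\
      forall i : 'I_m.+1, z i (inord i) = Num.min (pi m i) (pi n i).
Proof.
move=> pi_distr _ d_def m n mn.
have [z [z_opt z_simple]] := optimal_simple_prefix pi_distr d_def mn (leqnn m.+1).
by exists z; split=> // i; apply: z_simple.
Qed.
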